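(* Let $\beta>0$ and let $N$ be a nonnegative integer random variable with $P(N\ge n)=1-e^{-\beta/n}$ for all integers $n\ge1$. Consider the one-dimensional oriented percolation with random range with $p=1$ (every bond of $G_{\mathbf N}$ is open). Then $\theta(1,0)=P(0\to\infty)=0$ if $\beta<1$, and $\theta(1,0)>0$ if $\beta>1$.
   Context: One-dimensional percolation with random range (equivalently, the APRR model with $q=0$, restricted to the line through the origin in direction $\vec e_1$). Let $\mathbf N=(N_i)_{i\in\mathbb{Z}}$ be i.i.d. with law $N$, and let $G_{\mathbf N}$ be the oriented graph on $\mathbb{Z}$ with bonds $\{(i,i+n): i\in\mathbb{Z},\ 1\le n\le N_i\}$. Given $p\in[0,1]$, each bond of $G_{\mathbf N}$ is open independently with probability $p$. $(0\to\infty)$ is the event that $0$ is connected by oriented open paths to infinitely many vertices, and $\theta(p,0)=P(0\to\infty)$. *)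

From HB Require Import structures.
From mathcomp Require Import all_boot all_order all_algebra.
From mathcomp Require Import all_classical all_reals all_analysis.
Set Implicit Arguments. Unset Strict Implicit. Unset Printing Implicit Defensive.
Import Order.TTheory GRing.Theory Num.Theory.
Local Open Scope classical_set_scope.
Local Open Scope ring_scope.

(* One-dimensional oriented percolation with random range at p = 1:
   every bond (i, i+n), 1 <= n <= N_i, of G_N is open. *)

Inductive reach (Nf : int -> nat) (x : int) : int -> Prop :=
| reach_refl : reach Nf x x
| reach_step (y : int) (n : nat) :
    reach Nf x y -> (1 <= n <= Nf y)%N -> reach Nf x (y + n%:Z).

Definition perc_to_infty (Nf : int -> nat) : Prop :=
  infinite_set [set y | reach Nf 0 y].

Definition mutually_independent_nat {d} {T : measurableType d} {R : realType}
  (P : probability T R) (N : int -> T -> nat) : Prop :=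
  forall (s : seq int) (A : int -> set nat), uniq s ->
    P (\bigcap_(i in [set` s]) (N i @^-1` A i)) =
    (\prod_(i <- s) P (N i @^-1` A i))%E.

(* The cluster of 0 is infinite iff the walk from 0 never gets stuck at some m, i.e. no bond
   starting in {0, ..., m} reaches beyond m.  By independence, getting stuck at m has probability
   a_m = prod_(j <= m+1) exp(-beta/j), which is of order m^(-beta).  Splitting according to the
   last point below L at which the walk is stuck gives the renewal identity
   1 = g_L + sum_(m < L) a_m g_(L-m-1), where g_L is the probability of not getting stuck below L.
   If beta <= 1 then a_m >= exp(-beta)/(m+1) and g is nonincreasing, so g_L (1 + exp(-beta) H_L) <= 1
   with H_L the harmonic numbers, and g_L -> 0.  If beta > 1 the a_m are summable: once K is large,
   the event that N_0 > K and the walk restarted at 1 is stuck at some K + n has, by a union bound,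
   smaller probability than N_0 > K, and outside it 0 percolates. *)

From HB Require Import structures.
From mathcomp Require Import all_boot all_order all_algebra.
From mathcomp Require Import all_classical all_reals all_analysis.
From mathcomp Require Import zify ring lra.
Set Implicit Arguments. Unset Strict Implicit. Unset Printing Implicit Defensive.
Import Order.TTheory GRing.Theory Num.Theory.
Local Open Scope classical_set_scope.
Local Open Scope ring_scope.

Section Reachability.
Variable f : int -> nat.

Definition jumps_past (s : int) (m : nat) :=
  exists2 k : nat, (k <= m)%N & (m < k + f (s + k%:Z))%N.

Definition stuck_at (s : int) (m : nat) :=
  forall k : nat, (k <= m)%N -> (k + f (s + k%:Z) <= m)%N.

Definition jumps_below (s : int) (L : nat) :=
  forall m, (m < L)%N -> jumps_past s m.

Lemma not_jumps_past s m : ~ jumps_past s m <-> stuck_at s m.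
Proof.
split => [H k km|H [k km]]; last by have := H k km; rewrite leqNgt => /negP.
by rewrite leqNgt; apply/negP => hk; apply: H; exists k.
Qed.

Lemma reach_ge0 y : reach f 0 y -> 0 <= y.
Proof. by elim=> // y' n _ IH _; lia. Qed.

Lemma reach_stuck_le m y : stuck_at 0 m -> reach f 0 y -> y <= m%:Z.
Proof.
move=> stuck; elim=> [|y' n r IH /andP[_ hn]]; first lia.
have [k yk] : exists k : nat, y' = k%:Z by exists `|y'|%N; have := reach_ge0 r; lia.
subst y'.
have km : (k <= m)%N by lia.
have := stuck k km; rewrite add0r; lia.
Qed.

Lemma reach_all_of_jumps : (forall m, jumps_past 0 m) -> forall k : nat, reach f 0 k%:Z.
Proof.
move=> jumps; elim/ltn_ind => -[_|K IH]; first exact: reach_refl.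
have [j jK hj] := jumps K; rewrite add0r in hj.
have -> : K.+1%:Z = j%:Z + (K.+1 - j)%N%:Z by lia.
by apply: reach_step; [apply: IH; lia | lia].
Qed.

Lemma perc_to_inftyE : perc_to_infty f <-> forall m, jumps_past 0 m.
Proof.
rewrite /perc_to_infty; split => [fin_reach m|jumps fin_reach].
- apply: contrapT => /not_jumps_past stuck; apply: fin_reach.
  apply: (sub_finite_set _ (finite_image (fun k : nat => k%:Z) (finite_II m.+1))).
  move=> y /= ry; have := reach_ge0 ry; have := reach_stuck_le stuck ry.
  by move=> ym y0; exists `|y|%N; rewrite /=; lia.
- apply: infinite_nat.
  have <- : (fun k : nat => k%:Z) @^-1` [set y | reach f 0 y] = [set: nat].
    by apply/seteqP; split => // k _; exact: reach_all_of_jumps.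
  by apply: (finite_preimage _ fin_reach) => a b _ _ [].
Qed.

Lemma stuck_at_cat s m m' :
  stuck_at s m -> stuck_at (s + m.+1%:Z) m' -> stuck_at s (m + m'.+1).
Proof.
move=> stuck1 stuck2 k km; case: (leqP k m) => hk; first by have := stuck1 k hk; lia.
have := stuck2 (k - m.+1)%N ltac:(lia).
have -> : s + m.+1%:Z + (k - m.+1)%N%:Z = s + k%:Z by lia.
lia.
Qed.

Lemma jumps_below_or_last_stuck s L : jumps_below s L \/
  exists2 m, (m < L)%N & stuck_at s m /\ jumps_below (s + m.+1%:Z) (L - m.+1).
Proof.
case: (pselect (jumps_below s L)) => jumpsL; [by left | right].
pose stuckb m := (m < L)%N && `[< stuck_at s m >].
have some_stuck : exists m, stuckb m.
  apply: contrapT => none; apply: jumpsL => m mL.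
  apply: contrapT => /not_jumps_past stuck; apply: none; exists m.
  by rewrite /stuckb mL; apply/asboolP.
have stuckb_le i : stuckb i -> (i <= L)%N by move=> /andP[/ltnW].
have [m /andP[mL /asboolP stuckm] maxm] := ex_maxnP some_stuck stuckb_le.
exists m => //; split => // m' m'L; apply: contrapT => /not_jumps_past stuck'.
have := maxm (m + m'.+1)%N; rewrite /stuckb; have -> : (m + m'.+1 < L)%N by lia.
by move=> /(_ (asboolT (stuck_at_cat stuckm stuck'))); lia.
Qed.

Lemma jumps_below_stuck_lt s L m : jumps_below s L -> stuck_at s m -> (m < L)%N -> False.
Proof. by move=> jumpsL /not_jumps_past + mL; apply; exact: jumpsL. Qed.

Lemma jumps_below_stuck_gt s L m1 m2 : (m1 < m2)%N ->
  jumps_below (s + m1.+1%:Z) (L - m1.+1) -> stuck_at s m2 -> (m2 < L)%N -> False.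
Proof.
move=> m12 jumpsL stuck m2L; have [k km hk] := jumpsL (m2 - m1.+1)%N ltac:(lia).
have := stuck (m1.+1 + k)%N ltac:(lia).
have -> : s + (m1.+1 + k)%N%:Z = s + m1.+1%:Z + k%:Z by lia.
lia.
Qed.

Lemma perc_of_far_jump K : (K < f 0)%N -> (forall n, ~ stuck_at 1 (K + n)) ->
  perc_to_infty f.
Proof.
move=> f0K never_stuck; apply/perc_to_inftyE => m; case: (leqP m K) => mK.
  by exists 0%N; rewrite ?add0n ?addr0 //; lia.
have := never_stuck (m - K.+1)%N; rewrite -not_jumps_past => /contrapT[k km hk].
exists k.+1; first lia.
have -> : 0 + k.+1%:Z = 1 + k%:Z by lia.
by rewrite addSn ltnS; apply: leq_trans hk; lia.
Qed.

End Reachability.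
Definition depends_on (s : seq int) (Q : (int -> nat) -> Prop) :=
  forall f g : int -> nat, {in s, f =1 g} -> Q f -> Q g.

Definition update (f : int -> nat) (i : int) (v : nat) : int -> nat :=
  fun j => if j == i then v else f j.

Lemma depends_on_update i s Q v :
  depends_on (i :: s) Q -> depends_on s (fun f => Q (update f i v)).
Proof.
move=> dQ f g fg; apply: dQ => j; rewrite in_cons /update => /orP[/eqP->|js].
  by rewrite eqxx.
by case: ifP => // _; exact: fg.
Qed.

Section Cylinders.
Variables (R : realType) (d : measure_display) (T : measurableType d)
  (P : probability T R) (N : int -> T -> nat).
Hypothesis N_measurable : forall i n, measurable (N i @^-1` [set n]).
Hypothesis N_indep : mutually_independent_nat P N.

Definition config (w : T) : int -> nat := fun i => N i w.

Lemma measurable_preimage_N i (A : set nat) : measurable (N i @^-1` A).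
Proof.
have -> : N i @^-1` A = \bigcup_(n in A) N i @^-1` [set n].
  by apply/seteqP; split => [w /= Aw|w [n An /= ->//]]; exists (N i w).
by apply: bigcup_measurable => n _; exact: N_measurable.
Qed.

Lemma cylinder_nil Q : depends_on [::] Q ->
  [set w | Q (config w)] = setT \/ [set w | Q (config w)] = set0.
Proof.
move=> dQ; have const f : Q f <-> Q (fun _ => 0%N) by split; apply: dQ.
case: (pselect (Q (fun _ => 0%N))) => Q0; [left | right].
  by apply/seteqP; split => // w _; apply/const.
by apply/seteqP; split => // w /= /const.
Qed.

Lemma cylinder_update i s Q : depends_on (i :: s) Q ->
  [set w | Q (config w)] =
  \bigcup_v (N i @^-1` [set v] `&` [set w | Q (update (config w) i v)]).
Proof.
move=> dQ; apply/seteqP; split => [w /= Qw|w [v _ [/= <-]]].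
  exists (N i w) => //; split => //=; apply: dQ Qw => j _.
  by rewrite /update; case: eqP => // ->.
by apply: dQ => j _; rewrite /update; case: eqP => // ->.
Qed.

Lemma measurable_cylinder s Q : depends_on s Q -> measurable [set w | Q (config w)].
Proof.
elim: s Q => [|i s IH] Q dQ.
  by case: (cylinder_nil dQ) => ->; [exact: measurableT | exact: measurable0].
rewrite (cylinder_update dQ); apply: bigcup_measurable => v _.
apply: measurableI; first exact: N_measurable.
exact: IH (fun f => Q (update f i v)) (@depends_on_update i s Q v dQ).
Qed.

Lemma bigcap_preimage_cons j t (A : int -> set nat) :
  \bigcap_(k in [set` j :: t]) N k @^-1` A k =
  N j @^-1` A j `&` \bigcap_(k in [set` t]) N k @^-1` A k.
Proof.
apply/seteqP; split => [w /= H|w /= [Hj Ht] k].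
  split; first by apply: H; rewrite /= in_cons eqxx.
  by move=> k kt; apply: H; rewrite /= in_cons kt orbT.
by rewrite /= in_cons => /orP[/eqP->//|kt]; exact: Ht.
Qed.

Lemma measurable_bigcap_preimage (t : seq int) (A : int -> set nat) :
  measurable (\bigcap_(k in [set` t]) N k @^-1` A k).
Proof.
elim: t => [|j t IH]; first by rewrite set_nil bigcap_set0.
by rewrite bigcap_preimage_cons; apply: measurableI => //; exact: measurable_preimage_N.
Qed.

Lemma fin_num_prod_preimage t (A : int -> set nat) :
  (\prod_(i <- t) P (N i @^-1` A i))%E \is a fin_num.
Proof.
elim: t => [|j t IH]; first by rewrite big_nil.
by rewrite big_cons fin_numM// fin_num_measure//; exact: measurable_preimage_N.
Qed.

Lemma measure_cylinder_update C i s Q : measurable C -> depends_on (i :: s) Q ->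
  P (C `&` [set w | Q (config w)]) =
  (\sum_(v <oo) P (C `&` (N i @^-1` [set v] `&` [set w | Q (update (config w) i v)])))%E.
Proof.
move=> mC dQ.
have mterm v : measurable
    (C `&` (N i @^-1` [set v] `&` [set w | Q (update (config w) i v)])).
  apply: measurableI => //; apply: measurableI; first exact: N_measurable.
  exact: measurable_cylinder (@depends_on_update i s Q v dQ).
rewrite (cylinder_update dQ) setI_bigcupr measure_semi_bigcup //.
- by move=> v1 v2 _ _ [w [[_ [/= <- _]] [_ [/= <- _]]]].
- by apply: bigcup_measurable => v _; exact: mterm.
Qed.

Definition indep_cylinders (s : seq int) := forall Q, depends_on s Q ->
  forall t (A : int -> set nat), uniq t -> {in t, forall i, i \notin s} ->
  P (\bigcap_(i in [set` t]) N i @^-1` A i `&` [set w | Q (config w)]) =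
  ((\prod_(i <- t) P (N i @^-1` A i)) * P [set w | Q (config w)])%E.

Lemma indep_cylinders_nil : indep_cylinders [::].
Proof.
move=> Q dQ t A ut _; case: (cylinder_nil dQ) => ->.
  by rewrite setIT N_indep // probability_setT mule1.
by rewrite setI0 measure0 mule0.
Qed.

(* Conditioning on the value v of N_i reduces a cylinder over i :: s to cylinders over s. *)
Lemma indep_cylinders_cons i s : i \notin s -> indep_cylinders s ->
  indep_cylinders (i :: s).
Proof.
move=> iS IH Q dQ t A ut dis.
pose Pi v := (P (N i @^-1` [set v]) * P [set w | Q (update (config w) i v)])%E.
have split_i t' (A' : int -> set nat) : uniq t' -> i \notin t' ->
    {in t', forall j, j \notin s} ->
    P (\bigcap_(j in [set` t']) N j @^-1` A' j `&` [set w | Q (config w)]) =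
    ((\prod_(j <- t') P (N j @^-1` A' j)) * \sum_(v <oo) Pi v)%E.
  move=> ut' it' dis'; rewrite (@measure_cylinder_update _ i s Q) //; last first.
    exact: measurable_bigcap_preimage.
  have term v :
      P (\bigcap_(j in [set` t']) N j @^-1` A' j
         `&` (N i @^-1` [set v] `&` [set w | Q (update (config w) i v)])) =
      ((fine (\prod_(j <- t') P (N j @^-1` A' j)))%:E * Pi v)%E.
    pose A'' j := if j == i then [set v] else A' j.
    have A''E : {in t', A'' =1 A'}.
      by move=> j jt; rewrite /A''; case: eqP => // ji; move: it'; rewrite -ji jt.
    have A''i : A'' i = [set v] by rewrite /A'' eqxx.
    have -> : \bigcap_(j in [set` t']) N j @^-1` A' j
        `&` (N i @^-1` [set v] `&` [set w | Q (update (config w) i v)]) =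
        \bigcap_(j in [set` i :: t']) N j @^-1` A'' j
        `&` [set w | Q (update (config w) i v)].
      rewrite bigcap_preimage_cons setIA; congr (_ `&` _).
      rewrite setIC A''i; congr (_ `&` _).
      by apply: eq_bigcapr => j jt; rewrite A''E.
    rewrite (IH _ (@depends_on_update i s Q v dQ)); first last.
    - by move=> j; rewrite in_cons => /orP[/eqP->//|]; exact: dis'.
    - by rewrite /= it'.
    rewrite big_cons A''i fineK ?fin_num_prod_preimage //.
    rewrite (eq_big_seq (fun j => P (N j @^-1` A' j))); last first.
      by move=> j jt; rewrite -A''E.
    by rewrite (muleC (P _)) muleA.
  rewrite (eq_eseriesr (fun v _ => term v)) nneseriesZl ?fineK ?fin_num_prod_preimage //.
  by move=> v _; apply: mule_ge0.
rewrite split_i //; first last.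
- by move=> j jt; have := dis j jt; rewrite in_cons negb_or => /andP[].
- by apply/negP => it; have := dis i it; rewrite in_cons eqxx.
have := split_i [::] (fun _ => setT) isT isT (fun _ => ltac:(done)).
by rewrite big_nil mul1e set_nil bigcap_set0 setTI => ->.
Qed.

Lemma indep_cylinder s : uniq s -> indep_cylinders s.
Proof.
elim: s => [|i s IH]; first by move=> _; exact: indep_cylinders_nil.
by move=> /andP[iS us]; exact: indep_cylinders_cons (IH us).
Qed.

End Cylinders.

Section StuckProbability.
Variable R : realType.

Definition harmonic_num (n : nat) : R := \sum_(j < n) j.+1%:R^-1.

(* The probability of [stuck_at f s m]: the factor with j.+1 = m - k + 1 is P(N_(s+k) <= m - k). *)
Definition stuck_prob (b : R) (n : nat) : R := \prod_(j < n.+1) expR (- (b / j.+1%:R)).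

Lemma harmonic_num_ge0 n : 0 <= harmonic_num n.
Proof. by apply: sumr_ge0 => j _; rewrite invr_ge0. Qed.

Lemma harmonic_num_unbounded (M : R) : exists n, M < harmonic_num n.
Proof.
apply/not_existsP => bounded; apply: (@dvg_harmonic R).
apply: nondecreasing_is_cvgn.
  apply/nondecreasing_seqP => n; rewrite /series /= big_nat_recr//= lerDl.
  exact: harmonic_ge0.
exists M => _ [n _ <-]; rewrite /series /= big_mkord leNgt.
by apply/negP => /(bounded n).
Qed.

Lemma stuck_probS b n : stuck_prob b n.+1 = stuck_prob b n * expR (- (b / n.+2%:R)).
Proof. by rewrite /stuck_prob big_ord_recr. Qed.

Lemma stuck_prob_gt0 b n : 0 < stuck_prob b n.
Proof. by apply: prodr_gt0 => j _; exact: expR_gt0. Qed.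

Lemma stuck_probE b n : stuck_prob b n = expR (- (b * harmonic_num n.+1)).
Proof.
by rewrite /stuck_prob -expR_sum /harmonic_num mulr_sumr -sumrN.
Qed.

Lemma stuck_probD b c n : stuck_prob (b + c) n = stuck_prob b n * stuck_prob c n.
Proof. by rewrite !stuck_probE -expRD mulrDl opprD. Qed.

Lemma expRN_le_inv (y : R) : 0 <= y -> expR (- y) <= (1 + y)^-1.
Proof.
move=> y0; rewrite expRN lef_pV2 ?posrE ?expR_gt0 //; last by lra.
exact: expR_ge1Dx.
Qed.

(* For b <= 1 each factor e^{-b/(j+1)} is at least j/(j+1), and the product telescopes. *)
Lemma stuck_prob_ge b n : 0 < b -> b <= 1 -> expR (- b) / n.+1%:R <= stuck_prob b n.
Proof.
move=> b0 b1; elim: n => [|n IH]; first by rewrite /stuck_prob big_ord1 /= !divr1.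
have n2 : (0 : R) < n.+2%:R by rewrite ltr0n.
have factor_ge : (n.+1%:R / n.+2%:R : R) <= expR (- (b / n.+2%:R)).
  apply: le_trans (expR_ge1Dx _).
  rewrite -[X in _ <= X](@mulfK _ n.+2%:R) ?gt_eqF//.
  rewrite ler_pM2r ?invr_gt0 // mulrDl mul1r mulNr divfK ?gt_eqF//.
  rewrite -natr1; lra.
rewrite stuck_probS; apply: le_trans (ler_pM _ _ IH factor_ge); first last.
- by rewrite divr_ge0 // ltW // ltr0n.
- by rewrite divr_ge0 // ltW // expR_gt0.
by rewrite mulrA divfK ?pnatr_eq0.
Qed.

Lemma stuck_prob1_le n : stuck_prob 1 n <= n.+2%:R^-1.
Proof.
elim: n => [|n IH].
  by rewrite /stuck_prob big_ord1 /= divr1 (expRN_le_inv ler01).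
have n2 : (0 : R) < n.+2%:R by rewrite ltr0n.
have factor_le : expR (- (1 / n.+2%:R)) <= (n.+2%:R / n.+3%:R : R).
  apply: le_trans; first by apply: expRN_le_inv; rewrite divr_ge0 // ler0n.
  have -> : (1 + 1 / n.+2%:R : R) = n.+3%:R / n.+2%:R.
    have := ler0n R n; rewrite -[n.+3]addn1 natrD => hn; field.
    by rewrite gt_eqF //; lra.
  by rewrite invf_div.
rewrite stuck_probS; apply: le_trans (ler_pM _ _ IH factor_le) _.
- exact/ltW/stuck_prob_gt0.
- exact/ltW/expR_gt0.
by rewrite mulrA mulVf ?pnatr_eq0// mul1r.
Qed.

Lemma stuck_prob_decr_ge g n : 0 < g ->
  stuck_prob g n * (g * expR (- g) / n.+2%:R) <= stuck_prob g n - stuck_prob g n.+1.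
Proof.
move=> g0; rewrite stuck_probS -{2}(mulr1 (stuck_prob g n)) -mulrBr.
rewrite ler_pM2l ?stuck_prob_gt0 //.
set x := g / n.+2%:R.
have n2 : (0 : R) < n.+2%:R by rewrite ltr0n.
have x0 : 0 <= x by rewrite divr_ge0 // ltW.
have xg : x <= g by rewrite /x ler_pdivrMr // ler_peMr ?(ltW g0) // ler1n.
have e1 : expR (- g) <= expR (- x) by rewrite ler_expR lerN2.
have e2 := expR_ge1Dx x.
have e3 : expR x * expR (- x) = 1 by rewrite -expRD subrr expR0.
have e4 := expR_gt0 (- x).
have -> : g * expR (- g) / n.+2%:R = x * expR (- g) by rewrite /x mulrAC.
nra.
Qed.

(* Each term is bounded by a difference of consecutive values of stuck_prob (b - 1),
   so that the sum telescopes. *)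
Lemma sum_stuck_prob_le b K M : 1 < b -> (K <= M)%N ->
  (\sum_(K <= n < M) stuck_prob b n) * ((b - 1) * expR (- (b - 1)))
  <= stuck_prob (b - 1) K.
Proof.
move=> b1 KM; set g := b - 1; set c := g * expR (- g).
have g0 : 0 < g by rewrite subr_gt0.
have term_le n : stuck_prob b n * c <= stuck_prob g n - stuck_prob g n.+1.
  apply: le_trans (stuck_prob_decr_ge n g0).
  have -> : b = 1 + g by rewrite /g; ring.
  rewrite stuck_probD -mulrA.
  rewrite [X in _ <= X](_ : _ = n.+2%:R^-1 * (stuck_prob g n * c)); last first.
    by rewrite /c; ring.
  apply: ler_wpM2r (stuck_prob1_le n).
  by rewrite mulr_ge0 ?mulr_ge0 ?expR_ge0 ?ltW ?stuck_prob_gt0.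
rewrite mulr_suml; apply: le_trans (ler_sum _ (fun n _ => term_le n)) _.
rewrite (@telescope_sumr_eq _ _ _ (fun n => - stuck_prob g n)) //; last first.
  by move=> k _; rewrite opprK addrC.
have := stuck_prob_gt0 g M; lra.
Qed.

Lemma stuck_prob_lt g c : 0 < g -> 0 < c -> exists K, stuck_prob g K < c.
Proof.
move=> g0 c0; have [K HK] := harmonic_num_unbounded (c^-1 / g).
exists K; rewrite stuck_probE; apply: le_lt_trans (expRN_le_inv _) _.
  by rewrite mulr_ge0 ?harmonic_num_ge0 ?ltW.
have HK1 : harmonic_num K <= harmonic_num K.+1.
  by rewrite /harmonic_num big_ord_recr /= lerDl invr_ge0.
rewrite -[c]invrK ltf_pV2 ?posrE ?invr_gt0 //; last first.
  by rewrite ltr_wpDr // mulr_ge0 ?harmonic_num_ge0 ?ltW.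
move: HK; rewrite ltr_pdivrMr // => HK.
have : c^-1 < g * harmonic_num K.+1 by rewrite mulrC (lt_le_trans HK) // ler_pM2r.
lra.
Qed.

Lemma le0_of_mul_harmonic_le1 (r c : R) : 0 < c ->
  (forall L, r * (1 + c * harmonic_num L) <= 1) -> r <= 0.
Proof.
move=> c0 bounded; rewrite leNgt; apply/negP => r0.
have [L] := harmonic_num_unbounded (c^-1 / r); rewrite ltr_pdivrMr // => HL.
have := bounded L; have : c * c^-1 = 1 by rewrite mulfV ?gt_eqF.
nra.
Qed.

End StuckProbability.

Definition window (s : int) (n : nat) : seq int := [seq s + k%:Z | k <- iota 0 n].

Lemma window_uniq s n : uniq (window s n).
Proof. by rewrite map_inj_uniq ?iota_uniq // => x y /=; lia. Qed.

Lemma mem_window s n k : (k < n)%N -> s + k%:Z \in window s n.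
Proof. by move=> kn; apply: (map_f (fun k : nat => s + k%:Z)); rewrite mem_iota. Qed.

Lemma stuck_at_depends s m : depends_on (window s m.+1) (fun f => stuck_at f s m).
Proof. by move=> f g fg stuck k km; rewrite -fg ?mem_window //; exact: stuck. Qed.

Lemma jumps_below_depends s L : depends_on (window s L) (fun f => jumps_below f s L).
Proof.
move=> f g fg jumps m mL; have [k km hk] := jumps m mL.
by exists k; rewrite // -fg // mem_window //; lia.
Qed.

Section Percolation.
Variables (R : realType) (d : measure_display) (T : measurableType d)
  (P : probability T R) (N : int -> T -> nat) (beta : R).
Hypothesis beta_gt0 : 0 < beta.
Hypothesis N_measurable : forall i n, measurable (N i @^-1` [set n]).
Hypothesis N_indep : mutually_independent_nat P N.
Hypothesis N_law : forall (i : int) (n : nat), (1 <= n)%N ->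
  P [set w | (n <= N i w)%N] = (1 - expR (- (beta / n%:R)))%:E.

Let measurable_preimage_N := measurable_preimage_N N_measurable.

Definition stuck_event s m := [set w | stuck_at (config N w) s m].
Definition jumps_event s L := [set w | jumps_below (config N w) s L].
Definition perc_event := [set w | perc_to_infty (config N w)].

Lemma measurable_stuck_event s m : measurable (stuck_event s m).
Proof. exact: (measurable_cylinder N_measurable (@stuck_at_depends s m)). Qed.

Lemma measurable_jumps_event s L : measurable (jumps_event s L).
Proof. exact: (measurable_cylinder N_measurable (@jumps_below_depends s L)). Qed.

Lemma measure_N_le i v :
  P (N i @^-1` [set x | (x <= v)%N]) = (expR (- (beta / v.+1%:R)))%:E.
Proof.
have -> : N i @^-1` [set x | (x <= v)%N] = ~` [set w | (v.+1 <= N i w)%N].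
  by apply/seteqP; split => w /=; lia.
rewrite probability_setC; last exact: (measurable_preimage_N i [set x | (v.+1 <= x)%N]).
by rewrite N_law // -EFinB; congr EFin; lra.
Qed.

Lemma stuck_eventE s m : stuck_event s m =
  \bigcap_(j in [set` window s m.+1])
    N j @^-1` [set x : nat | x%:Z + j <= s + m%:Z].
Proof.
apply/seteqP; split => w; rewrite /stuck_event /stuck_at /config /=.
  by move=> stuck j /mapP[k]; rewrite mem_iota => kk -> /=; have := stuck k; lia.
move=> H k km; have /= := H (s + k%:Z) (mem_window s (_ : k < m.+1)%N); lia.
Qed.

Lemma measure_stuck_event s m : P (stuck_event s m) = (stuck_prob beta m)%:E.
Proof.
rewrite stuck_eventE N_indep ?window_uniq // big_map.
rewrite (eq_big_seq (fun k => (expR (- (beta / (m - k).+1%:R)))%:E)); last first.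
  move=> k; rewrite mem_iota => kk; rewrite -(measure_N_le (s + k%:Z)).
  by congr (P _); apply/seteqP; split => w /=; lia.
rewrite prodEFin; congr EFin.
rewrite /stuck_prob -(big_mkord xpredT (fun j => expR (- (beta / j.+1%:R)))).
rewrite -[iota 0 m.+1]/(index_iota 0 m.+1) big_nat_rev; apply: eq_big_nat => i im.
by rewrite add0n; congr (expR (- (beta / _%:R))); lia.
Qed.

Lemma measure_stuck_jumps s L m :
  P (stuck_event s m `&` jumps_event (s + m.+1%:Z) (L - m.+1)) =
  ((stuck_prob beta m)%:E * P (jumps_event (s + m.+1%:Z) (L - m.+1)))%E.
Proof.
rewrite -(measure_stuck_event s m) !stuck_eventE.
rewrite (indep_cylinder N_measurable N_indep (window_uniq _ _) (@jumps_below_depends _ _));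
  [by rewrite N_indep ?window_uniq | exact: window_uniq |].
move=> i /mapP[k]; rewrite mem_iota => km ->; apply/negP => /mapP[k'].
by rewrite mem_iota => _; lia.
Qed.

(* Decomposing according to the last point m < L at which the walk from s is stuck. *)
Lemma renewal s L : (P (jumps_event s L) +
  \sum_(m < L) (stuck_prob beta m)%:E * P (jumps_event (s + m.+1%:Z) (L - m.+1)) = 1)%E.
Proof.
pose F m := if (m < L)%N
  then stuck_event s m `&` jumps_event (s + m.+1%:Z) (L - m.+1) else set0.
have mF m : measurable (F m).
  rewrite /F; case: ifP => _; last exact: measurable0.
  by apply: measurableI; [exact: measurable_stuck_event | exact: measurable_jumps_event].
have tF : trivIset setT F.
  move=> i j _ _; rewrite /F; case: ifP => iL; last by rewrite set0I => -[].
  case: ifP => jL; last by rewrite setI0 => -[].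
  move=> [w [[Ei Gi] [Ej Gj]]]; case: (ltngtP i j) => // ij; exfalso.
  - exact: (jumps_below_stuck_gt ij Gi Ej jL).
  - exact: (jumps_below_stuck_gt ij Gj Ei iL).
have cover : setT = jumps_event s L `|` \big[setU/set0]_(m < L) F m.
  apply/seteqP; split => // w _; rewrite -bigcup_mkord.
  case: (jumps_below_or_last_stuck (config N w) s L) => [|[m mL stuck]]; first by left.
  by right; exists m => //; rewrite /F mL.
rewrite -(probability_setT P) cover measureU; first last.
- apply/seteqP; split => // w [jumps]; rewrite -bigcup_mkord => -[m /= mL].
  by rewrite /F mL => -[stuck _]; exact: (jumps_below_stuck_lt jumps stuck mL).
- by apply: bigsetU_measurable => i _.
- exact: measurable_jumps_event.
rewrite measure_bigsetU //; congr (_ + _)%E; apply: eq_bigr => m _; apply/esym.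
by rewrite /F ltn_ord; exact: measure_stuck_jumps.
Qed.

Lemma fin_num_renewal_sum s L :
  (\sum_(m < L) (stuck_prob beta m)%:E * P (jumps_event (s + m.+1%:Z) (L - m.+1)))%E
  \is a fin_num.
Proof.
apply: (big_ind (fun x => x \is a fin_num)) => // [x y hx hy|m _].
  by rewrite fin_numD hx hy.
by rewrite fin_numM // fin_num_measure //; exact: measurable_jumps_event.
Qed.

Lemma measure_jumps_event_shift L s : P (jumps_event s L) = P (jumps_event 0 L).
Proof.
elim/ltn_ind: L s => L IH s.
have sum_shift : (\sum_(m < L) (stuck_prob beta m)%:E * P (jumps_event (s + m.+1%:Z) (L - m.+1)) =
   \sum_(m < L) (stuck_prob beta m)%:E * P (jumps_event (0 + m.+1%:Z) (L - m.+1)))%E.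
  by apply: eq_bigr => m _; rewrite IH 1?[in RHS]IH //; have := ltn_ord m; lia.
have := renewal s L; rewrite sum_shift -(renewal 0 L) => renewal_eq.
by rewrite -[LHS](addeK _ (fin_num_renewal_sum 0 L)) renewal_eq addeK ?fin_num_renewal_sum.
Qed.

Definition jump_prob L := fine (P (jumps_event 0 L)).

Lemma jump_probE L : P (jumps_event 0 L) = (jump_prob L)%:E.
Proof. by rewrite fineK // fin_num_measure //; exact: measurable_jumps_event. Qed.

Lemma jump_prob_ge0 L : 0 <= jump_prob L.
Proof. by rewrite fine_ge0 // measure_ge0. Qed.

Lemma jump_prob_le L L' : (L' <= L)%N -> jump_prob L <= jump_prob L'.
Proof.
move=> LL'; rewrite -lee_fin -!jump_probE.
apply: le_measure; rewrite ?inE; try exact: measurable_jumps_event.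
by move=> w jumps m mL; apply: jumps; lia.
Qed.

Lemma jump_prob_renewal L :
  jump_prob L + \sum_(m < L) stuck_prob beta m * jump_prob (L - m.+1) = 1.
Proof.
have := renewal 0 L; rewrite jump_probE.
under eq_bigr => m _ do rewrite measure_jumps_event_shift jump_probE -EFinM.
by rewrite sumEFin -EFinD => -[].
Qed.

Lemma jump_prob_le_inv L : beta <= 1 ->
  jump_prob L * (1 + expR (- beta) * harmonic_num R L) <= 1.
Proof.
move=> beta_le1; rewrite -[X in _ <= X](jump_prob_renewal L) mulrDr mulr1 lerD2l.
rewrite /harmonic_num !mulr_sumr; apply: ler_sum => m _; rewrite mulrC.
apply: ler_pM.
- by rewrite divr_ge0 // ltW // expR_gt0.
- exact: jump_prob_ge0.
- exact: stuck_prob_ge.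
- by apply: jump_prob_le; lia.
Qed.

Lemma perc_eventE : perc_event = \bigcap_L jumps_event 0 L.
Proof.
apply/seteqP; split => w /=; rewrite /perc_event /= perc_to_inftyE.
  by move=> jumps L _ m mL; exact: jumps.
by move=> jumps m; exact: (jumps m.+1 I m).
Qed.

Lemma measurable_perc_event : measurable perc_event.
Proof.
by rewrite perc_eventE; apply: bigcapT_measurable => L; exact: measurable_jumps_event.
Qed.

Lemma measure_perc_event_eq0 : beta < 1 -> P perc_event = 0%E.
Proof.
move=> beta_lt1; set r := fine (P perc_event).
have Pr : P perc_event = r%:E.
  by rewrite fineK // fin_num_measure //; exact: measurable_perc_event.
have r_le L : r <= jump_prob L.
  rewrite -lee_fin -Pr -jump_probE; apply: le_measure; rewrite ?inE.
  - exact: measurable_perc_event.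
  - exact: measurable_jumps_event.
  by rewrite perc_eventE => w /(_ L I).
rewrite Pr; congr EFin; apply/le_anti; rewrite fine_ge0 ?measure_ge0 // andbT.
apply: (@le0_of_mul_harmonic_le1 _ _ (expR (- beta)) (expR_gt0 _)) => L.
apply: le_trans (jump_prob_le_inv L (ltW beta_lt1)).
by rewrite ler_wpM2r // addr_ge0 // mulr_ge0 ?expR_ge0 ?harmonic_num_ge0.
Qed.

Definition far_jump K := N 0 @^-1` [set x | (K < x)%N].

Lemma measure_far_jump K : P (far_jump K) = (1 - expR (- (beta / K.+1%:R)))%:E.
Proof. exact: N_law. Qed.

Lemma measure_far_jump_stuck K n :
  P (far_jump K `&` stuck_event 1 n) = (P (far_jump K) * (stuck_prob beta n)%:E)%E.
Proof.
have far_jumpE : far_jump K =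
    \bigcap_(j in [set` [:: (0 : int)]]) N j @^-1` [set x | (K < x)%N].
  by rewrite set_cons1 bigcap_set1.
rewrite -(measure_stuck_event 1 n) {1}far_jumpE.
rewrite (indep_cylinder N_measurable N_indep (window_uniq 1 n.+1) (@stuck_at_depends 1 n)) //.
  by rewrite big_cons big_nil mule1.
by move=> i; rewrite inE => /eqP ->; apply/negP => /mapP[k _]; lia.
Qed.

Lemma measure_far_jump_then_stuck_le K : 1 < beta ->
  (P (\bigcup_n (far_jump K `&` stuck_event 1 (K + n)))
   <= P (far_jump K) *
      (stuck_prob (beta - 1) K / ((beta - 1) * expR (- (beta - 1))))%:E)%E.
Proof.
move=> beta_gt1; set g := beta - 1; set c := g * expR (- g).
have c0 : 0 < c by rewrite mulr_gt0 ?expR_gt0 // subr_gt0.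
pose F n := far_jump K `&` stuck_event 1 (K + n).
have mF n : measurable (F n).
  by apply: measurableI; [exact: measurable_preimage_N | exact: measurable_stuck_event].
have mU : measurable (\bigcup_n F n) by exact: bigcupT_measurable.
apply: le_trans (measure_sigma_subadditive P mF mU (fun x h => h)) _.
rewrite (eq_eseriesr (fun n _ => measure_far_jump_stuck K (K + n))).
rewrite measure_far_jump nneseriesZl; last first.
  by move=> n _; rewrite lee_fin ltW ?stuck_prob_gt0.
rewrite lee_pmul2l ?lte_fin ?subr_gt0 ?expR_lt1 ?oppr_lt0 ?divr_gt0 //.
apply: lime_le.
  by apply: is_cvg_nneseries => n _ _; rewrite lee_fin ltW ?stuck_prob_gt0.
apply: nearW => M; rewrite sumEFin lee_fin ler_pdivlMr //.
rewrite (_ : \sum_(0 <= i < M) _ = \sum_(0 + K <= n < M + K) stuck_prob beta n).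
  by rewrite add0n addnC; exact: (sum_stuck_prob_le beta_gt1 (leq_addr M K)).
by rewrite big_addn addnK; apply: eq_bigr => i _; rewrite addnC.
Qed.

Lemma measure_perc_event_gt0 : 1 < beta -> (0 < P perc_event)%E.
Proof.
move=> beta_gt1; set g := beta - 1; set c := g * expR (- g).
have g0 : 0 < g by rewrite subr_gt0.
have c0 : 0 < c by rewrite mulr_gt0 ?expR_gt0.
have [K stuckK] := stuck_prob_lt g0 c0.
pose U := \bigcup_n (far_jump K `&` stuck_event 1 (K + n)).
have mjump : measurable (far_jump K) by exact: measurable_preimage_N.
have mU : measurable U.
  apply: bigcupT_measurable => n; apply: measurableI => //.
  exact: measurable_stuck_event.
have U_lt : (P U < P (far_jump K))%E.
  apply: le_lt_trans (measure_far_jump_then_stuck_le K beta_gt1) _.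
  rewrite measure_far_jump -EFinM lte_fin gtr_pMr ?ltr_pdivrMr ?mul1r //.
  by rewrite subr_gt0 expR_lt1 oppr_lt0 divr_gt0.
have jump_not_stuck : far_jump K `\` U `<=` perc_event.
  move=> w [jump not_stuck]; apply: (perc_of_far_jump jump) => n stuck.
  by apply: not_stuck; exists n.
apply: (lt_le_trans _ (le_measure _ _ _ jump_not_stuck)); rewrite ?inE; first last.
- exact: measurable_perc_event.
- exact: measurableD.
rewrite measureD // ?ltey_eq ?fin_num_measure // setIidr; last by move=> w [n _ []].
by rewrite sube_gt0.
Qed.

End Percolation.

Theorem theorem5 (R : realType) (d : measure_display) (T : measurableType d)
  (P : probability T R) (N : int -> T -> nat) (beta : R) :
  0 < beta ->
  (forall (i : int) (n : nat), measurable (N i @^-1` [set n])) ->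
  mutually_independent_nat P N ->
  (forall (i : int) (n : nat), (1 <= n)%N ->
     P [set w | (n <= N i w)%N] = (1 - expR (- (beta / n%:R)))%:E) ->
  (beta < 1 -> P [set w | perc_to_infty (fun i => N i w)] = 0%E) /\
  (1 < beta -> (0 < P [set w | perc_to_infty (fun i => N i w)])%E).
Proof.
move=> beta_gt0 N_measurable N_indep N_law; split.
- exact: measure_perc_event_eq0 N_indep N_law.
- exact: measure_perc_event_gt0 N_measurable N_indep N_law.
Qed.
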